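(* Let $\alpha>1$ and let $d>1$ be an integer. Let $L_d(\alpha)=\{\alpha^n : n\in\mathbb{N}_0\}^d\subseteq\mathbb{R}^d$ and $k=\left\lfloor\sqrt{\tfrac{1}{\alpha-1}}\,\right\rfloor$. Then \[h(L_d(\alpha))\ge\binom{k+d-1}{d-1}.\]
   Context: For a set $S\subseteq\mathbb{R}^d$, the Helly number $h(S)$ is the smallest $h$ such that the following holds: for every finite family $\mathcal{F}$ of convex sets in $\mathbb{R}^d$, if every $h$ or fewer sets of $\mathcal{F}$ have a point of $S$ in their intersection, then the intersection of all sets of $\mathcal{F}$ contains a point of $S$. If no such $h$ exists, $h(S)=\infty$. Here $\mathbb{N}_0=\{0,1,2,\dots\}$. *)

From HB Require Import structures.
From mathcomp Require Import all_boot all_order all_algebra.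
From mathcomp Require Import reals.
Set Implicit Arguments. Unset Strict Implicit. Unset Printing Implicit Defensive.
Import Order.TTheory GRing.Theory Num.Theory.
Local Open Scope ring_scope.

Definition convex_set (R : realType) (d : nat) (C : 'rV[R]_d -> Prop) : Prop :=
  forall x y t, C x -> C y -> 0 <= t -> t <= 1 -> C (t *: x + (1 - t) *: y).

Definition helly_property (R : realType) (d : nat)
    (S : 'rV[R]_d -> Prop) (h : nat) : Prop :=
  forall (m : nat) (F : 'I_m -> ('rV[R]_d -> Prop)),
    (forall i, convex_set (F i)) ->
    (forall I : {set 'I_m}, (#|I| <= h)%N ->
        exists x, S x /\ forall i, i \in I -> F i x) ->
    exists x, S x /\ forall i, F i x.

(* h(S) >= N, where h(S) is the least h with the Helly property (or infinity
   if none exists): every h with the Helly property is at least N. *)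
Definition helly_number_ge (R : realType) (d : nat)
    (S : 'rV[R]_d -> Prop) (N : nat) : Prop :=
  forall h, helly_property S h -> (N <= h)%N.

Definition Ld (R : realType) (d : nat) (alpha : R) : 'rV[R]_d -> Prop :=
  fun x => forall i : 'I_d, exists n : nat, x ord0 i = alpha ^+ n.

From mathcomp Require Import all_boot all_order all_algebra.
From mathcomp Require Import reals.
From mathcomp Require Import ring lra zify.

Set Implicit Arguments.
Unset Strict Implicit.
Unset Printing Implicit Defensive.
Import Order.TTheory GRing.Theory Num.Theory.
Local Open Scope ring_scope.

(* With k as in the statement, k^2 (alpha - 1) <= 1.  Let E be the exponent
   vectors t in N^d with |t| = k; there are C(k + d - 1, d - 1) of them.  For
   t in E let F_t be the convex set of x with sum_j x_j alpha^-t_j > d which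
   also satisfy, for every u with |u| > k,
   sum_{u_j > 0} x_j alpha^-u_j < #{j | u_j > 0}.  The lattice point alpha^t
   lies in every F_t' with t' <> t: the first inequality holds because
   n |-> alpha^n is convex, the others because alpha^c + alpha^-(c+1) < 2 for
   c < k.  But no lattice point alpha^n lies in all of them: if |n| > k it
   violates the cut for u = n, and if |n| <= k it lies below some t in E and
   violates the first inequality of F_t. *)

Section RealInequalities.
Variable R : realFieldType.
Implicit Types (a x : R).

Lemma bernoulli x n : -1 <= x -> 1 + n%:R * x <= (1 + x) ^+ n.
Proof.
move=> x_ge; elim: n => [|n IHn]; first by rewrite mul0r addr0 expr0.
have x1_ge0 : 0 <= 1 + x by lra.
have nxx_ge0 : 0 <= n%:R * x * x by rewrite -mulrA mulr_ge0 // -expr2 sqr_ge0.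
have := ler_wpM2l x1_ge0 IHn; rewrite exprS -natr1; lra.
Qed.

Lemma exprn_mul_onem_le1 a n : 1 <= a -> a ^+ n * (1 - n%:R * (a - 1)) <= 1.
Proof.
move=> a_ge1; elim: n => [|n IHn]; first by rewrite expr0 mul0r subr0 mulr1.
have an_ge0 : 0 <= a ^+ n by rewrite exprn_ge0 //; lra.
have step_ge0 : 0 <= a ^+ n * (n%:R + 1) * (a - 1) ^+ 2.
  by rewrite mulr_ge0 ?sqr_ge0 // mulr_ge0 // addr_ge0.
have -> : a ^+ n.+1 * (1 - n.+1%:R * (a - 1)) =
    a ^+ n * (1 - n%:R * (a - 1)) - a ^+ n * (n%:R + 1) * (a - 1) ^+ 2.
  by rewrite exprS -natr1; ring.
lra.
Qed.

(* Multiplied by a^(c+1) the claim reads a (a^c - 1)^2 < a - 1, and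
   a^c (1 - c (a - 1)) <= 1 controls a^c - 1. *)
Lemma expr_addV_lt2 a c : 1 < a -> (c.+1 ^ 2)%:R * (a - 1) <= 1 ->
  a ^+ c + (a ^+ c.+1)^-1 < 2.
Proof.
move=> a_gt1 small.
have [e e_gt0 a_eq] : exists2 e, 0 < e & a = 1 + e.
  by exists (a - 1); [rewrite subr_gt0 | ring].
have qv_le1 := exprn_mul_onem_le1 c (ltW a_gt1).
have v_ge1 : 1 <= a ^+ c by rewrite exprn_ege1 // ltW.
have av_gt0 : 0 < a * a ^+ c by rewrite mulr_gt0 ?exprn_gt0 //; lra.
rewrite exprS -(ltr_pM2r av_gt0) mulrDl mulVf ?gt_eqF //.
have e_eq : a - 1 = e by rewrite a_eq; ring.
rewrite e_eq natrX -natr1 in small qv_le1.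
set v := a ^+ c in qv_le1 v_ge1 *; set C := c%:R in small qv_le1.
rewrite {av_gt0}a_eq.
have C_ge0 : 0 <= C by [].
have q_gt0 : 0 < 1 - C * e.
  have : 0 <= C ^+ 2 * e by rewrite mulr_ge0 ?sqr_ge0 // ltW.
  move: small; rewrite expr2; lra.
have dev_le : ((1 - C * e) * (v - 1)) ^+ 2 <= (C * e) ^+ 2.
  have q_ge0 := ltW q_gt0.
  rewrite ler_pXn2r ?nnegrE ?mulr_ge0 ?subr_ge0 //; lra.
have : (1 + e) * (v - 1) ^+ 2 < e.
  rewrite -(ltr_pM2r (exprn_gt0 2 q_gt0)).
  have -> : (1 + e) * (v - 1) ^+ 2 * (1 - C * e) ^+ 2 =
      (1 + e) * ((1 - C * e) * (v - 1)) ^+ 2 by ring.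
  have := ler_wpM2l (ltW (addr_gt0 ltr01 e_gt0)) dev_le.
  have : (1 + e) * (C * e) ^+ 2 < e * (1 - C * e) ^+ 2.
    by move: small; rewrite !expr2; nra.
  lra.
lra.
Qed.

Lemma expr_div_addV_lt2 a k s b : 1 < a -> (k ^ 2)%:R * (a - 1) <= 1 ->
  (0 < s)%N -> (k < s + b)%N -> a ^+ k / a ^+ s + (a ^+ b)^-1 < 2.
Proof.
move=> a_gt1 small s_gt0 lt_k_sb.
have a_gt0 : 0 < a by lra.
case: (leqP s k) => [le_sk | lt_ks].
  have le_c1k : ((k - s).+1 <= k)%N by lia.
  have le_c1b : ((k - s).+1 <= b)%N by lia.
  rewrite -[in a ^+ k](subnK le_sk) exprD mulfK ?expf_neq0 ?gt_eqF //.
  apply: le_lt_trans (expr_addV_lt2 (c := k - s) a_gt1 _); last first.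
    by apply: le_trans small; apply: ler_wpM2r; [lra | rewrite ler_nat leq_exp2r].
  by rewrite lerD2l lef_pV2 ?posrE ?exprn_gt0 // ler_eXn2l.
have : a ^+ k / a ^+ s < 1 by rewrite ltr_pdivrMr ?exprn_gt0 // mul1r ltr_eXn2l.
have : (a ^+ b)^-1 <= 1.
  by rewrite invr_le1 ?unitfE ?expf_neq0 ?gt_eqF ?exprn_gt0 ?exprn_ege1 ?(ltW a_gt1).
lra.
Qed.

(* The points (n, a^n) lie above the secant through n = -1 and n = 0, strictly
   for n > 0. *)
Lemma expr_div_gt a m n : 1 < a -> (n < m)%N ->
  1 + (1 - a^-1) * (m%:R - n%:R) < a ^+ m / a ^+ n.
Proof.
move=> a_gt1 lt_nm.
have a_neq0 : a != 0 by rewrite gt_eqF //; lra.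
have slopes : 1 - a^-1 < a - 1.
  rewrite -subr_gt0 (_ : a - 1 - (1 - a^-1) = (a - 1) ^+ 2 / a).
    by rewrite divr_gt0 ?exprn_gt0 //; lra.
  by rewrite expr2; field.
rewrite -[in a ^+ m](subnK (ltnW lt_nm)) exprD mulfK ?expf_neq0 //.
rewrite -natrB ?(ltnW lt_nm) //.
have mn_gt0 : 0 < (m - n)%:R :> R by rewrite ltr0n subn_gt0.
have := bernoulli (x := a - 1) (m - n); rewrite addrCA subrr addr0.
move: slopes; rewrite -(ltr_pM2l mn_gt0); lra.
Qed.

Lemma expr_div_ge a m n : 1 < a ->
  1 + (1 - a^-1) * (m%:R - n%:R) <= a ^+ m / a ^+ n.
Proof.
move=> a_gt1; have a_neq0 : a != 0 by rewrite gt_eqF //; lra.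
case: (ltngtP n m) => [lt_nm | lt_mn | ->]; first exact/ltW/expr_div_gt.
- rewrite -[in a ^+ n](subnK (ltnW lt_mn)) exprD invfM mulrCA mulfV ?expf_neq0 //.
  rewrite mulr1 -exprVn.
  have := bernoulli (x := a^-1 - 1) (n - m).
  rewrite natrB ?(ltnW lt_mn) // addrCA subrr addr0.
  have : 0 < a^-1 by rewrite invr_gt0; lra.
  lra.
- by rewrite (subrr m%:R) mulr0 addr0 mulfV ?expf_neq0.
Qed.

Lemma sum_subr1_le_prod (I : Type) (r : seq I) (P : pred I) (x : I -> R) :
  (forall i, P i -> 1 <= x i) ->
  \sum_(i <- r | P i) (x i - 1) <= \prod_(i <- r | P i) x i - 1.
Proof.
move=> x_ge1.
suff [] : \sum_(i <- r | P i) (x i - 1) <= \prod_(i <- r | P i) x i - 1 /\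
    1 <= \prod_(i <- r | P i) x i by [].
apply: (big_rec2 (fun s p => s <= p - 1 /\ 1 <= p)); first by rewrite subrr.
move=> i s p Pi [le_s p_ge1]; have xi_ge1 := x_ge1 i Pi.
split; first nra.
by rewrite mulr_ege1.
Qed.

Lemma sum_mul_expr_subr1_le (I : finType) a W (w : I -> R) (p : I -> nat) :
  1 <= a -> 0 <= W -> (forall i, 0 <= w i <= W) ->
  \sum_i w i * (a ^+ p i - 1) <= W * (a ^+ (\sum_i p i) - 1).
Proof.
move=> a_ge1 W_ge0 w_bound.
apply: le_trans (_ : W * \sum_i (a ^+ p i - 1) <= _).
  rewrite mulr_sumr; apply: ler_sum => i _; apply: ler_wpM2r.
    by rewrite subr_ge0 exprn_ege1.
  by case/andP: (w_bound i).
rewrite ler_wpM2l // -prodrXr.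
by apply: sum_subr1_le_prod => i _; apply: exprn_ege1.
Qed.

Lemma onem_prod_le_sum (I : Type) (r : seq I) (P : pred I) (x : I -> R) :
  (forall i, P i -> 0 <= x i <= 1) ->
  1 - \prod_(i <- r | P i) x i <= \sum_(i <- r | P i) (1 - x i).
Proof.
move=> x01.
suff [] : 1 - \prod_(i <- r | P i) x i <= \sum_(i <- r | P i) (1 - x i) /\
    0 <= \prod_(i <- r | P i) x i <= 1 by [].
apply: (big_rec2 (fun s p => 1 - p <= s /\ 0 <= p <= 1)).
  by split; [rewrite subrr | rewrite ler01 lexx].
move=> i s p Pi [le_s /andP[p_ge0 p_le1]].
have /andP[xi_ge0 xi_le1] := x01 i Pi.
split; first nra.
by rewrite mulr_ge0 //= mulr_ile1.
Qed.

Lemma convex_comb_lt (t p q c : R) : 0 <= t <= 1 -> p < c -> q < c ->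
  t * p + (1 - t) * q < c.
Proof.
move=> /andP[t_ge0 t_le1] lt_pc lt_qc.
case: (ltrP t 1) => [t_lt1 | t_ge1]; last first.
  have -> : t = 1 by apply/eqP; rewrite eq_le t_le1 t_ge1.
  lra.
have : (1 - t) * q < (1 - t) * c by rewrite ltr_pM2l // subr_gt0.
have : t * p <= t * c by rewrite ler_wpM2l // ltW.
lra.
Qed.

End RealInequalities.

Lemma truncn_sqrtV_sqr_le (F : archiRcfType) (e : F) : 0 < e ->
  (Num.truncn (Num.sqrt e^-1) ^ 2)%:R * e <= 1.
Proof.
move=> e_gt0.
have eV_gt0 : 0 < e^-1 by rewrite invr_gt0.
have le_sqrt : (Num.truncn (Num.sqrt e^-1))%:R <= Num.sqrt e^-1.
  by rewrite truncn_le sqrtr_ge0.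
rewrite -(ler_pM2r eV_gt0) mulfK ?gt_eqF // mul1r.
rewrite natrX -[X in _ <= X](sqr_sqrtr (ltW eV_gt0)).
by rewrite ler_pXn2r ?nnegrE ?sqrtr_ge0.
Qed.

Lemma sum_eq_exists_ltn (I : finType) (t t' : I -> nat) :
  (\sum_i t i = \sum_i t' i)%N -> ~ t =1 t' -> exists i, (t' i < t i)%N.
Proof.
move=> sum_eq neq; apply/existsP; apply: contraT; rewrite negb_exists.
move=> /forallP le_t; case: neq => i; apply/eqP.
have le_tt' j : (t j <= t' j)%N by rewrite leqNgt le_t.
have [_] := leqif_sum (fun j (_ : true) => leqif_eq (le_tt' j)).
by rewrite sum_eq eqxx => /esym/forallP/(_ i).
Qed.

Section ConvexSets.
Context {R : realType} {d : nat}.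
Implicit Types (w : 'I_d -> R) (x y : 'rV[R]_d).

Definition wsum w x : R := \sum_j w j * x ord0 j.

Lemma wsum_convex_comb w x y t :
  wsum w (t *: x + (1 - t) *: y) = t * wsum w x + (1 - t) * wsum w y.
Proof.
rewrite /wsum !mulr_sumr -big_split; apply: eq_bigr => j _ /=.
by rewrite !mxE; ring.
Qed.

Lemma convex_wsum_lt w c : convex_set (fun x => wsum w x < c).
Proof.
move=> x y t lt_x lt_y t_ge0 t_le1.
by rewrite wsum_convex_comb convex_comb_lt ?t_ge0.
Qed.

Lemma convex_wsum_gt w c : convex_set (fun x => c < wsum w x).
Proof.
move=> x y t lt_x lt_y t_ge0 t_le1.
by rewrite wsum_convex_comb -ltrN2 opprD -!mulrN convex_comb_lt ?t_ge0 ?ltrN2.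
Qed.

Lemma convex_setI (C1 C2 : 'rV[R]_d -> Prop) :
  convex_set C1 -> convex_set C2 -> convex_set (fun x => C1 x /\ C2 x).
Proof.
move=> conv1 conv2 x y t [x1 x2] [y1 y2] t_ge0 t_le1.
by split; [exact: conv1 | exact: conv2].
Qed.

Lemma convex_set_forall (I : Type) (P : I -> Prop) (C : I -> 'rV[R]_d -> Prop) :
  (forall i, P i -> convex_set (C i)) ->
  convex_set (fun x => forall i, P i -> C i x).
Proof. by move=> convC x y t Cx Cy t_ge0 t_le1 i Pi; apply: convC; auto. Qed.

Lemma helly_number_ge_critical (S : 'rV[R]_d -> Prop) (I : finType) (E : {set I})
    (F : I -> 'rV[R]_d -> Prop) :
  (forall i, i \in E -> convex_set (F i)) ->
  (forall j, j \in E -> exists x, S x /\ forall i, i \in E -> i != j -> F i x) ->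
  ~ (exists x, S x /\ forall i, i \in E -> F i x) ->
  helly_number_ge S #|E|.
Proof.
move=> convF meet_but_one no_common h helly_h; rewrite leqNgt; apply/negP => lt_hE.
apply: no_common.
have [|x [Sx Fx]] :=
  helly_h _ (fun i => F (enum_val i)) (fun i => convF _ (enum_valP i)).
  move=> J card_J.
  have [j0 j0_notin] : exists j0, j0 \notin J.
    have lt_J : (#|J| < #|'I_#|E| |)%N by rewrite card_ord (leq_ltn_trans card_J).
    have : (0 < #|~: J|)%N by move: lt_J; rewrite -(cardsC J); lia.
    by case/card_gt0P => j0; rewrite inE; exists j0.
  have [x [Sx Fx]] := meet_but_one _ (enum_valP j0).
  exists x; split => // i iJ; apply: Fx; first exact: enum_valP.
  by apply: contraNneq j0_notin => /enum_val_inj <-.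
exists x; split => // i iE.
by have := Fx (enum_rank_in iE i); rewrite enum_rankK_in.
Qed.

End ConvexSets.

Section ExponentialLattice.
Variables (R : realType) (a : R).
Hypothesis a_gt1 : 1 < a.

Let expr_gt0 n : 0 < a ^+ n. Proof. exact/exprn_gt0/(lt_trans ltr01 a_gt1). Qed.

Definition powpt {d} (e : 'I_d -> nat) : 'rV[R]_d := \row_j a ^+ e j.

Definition invpow {d} (t : 'I_d -> nat) (j : 'I_d) : R := (a ^+ t j)^-1.

(* Weight 0 off the support of u: weight a^0 = 1 there would make the cut for
   u = (k + 1) e_1 exclude a^(k e_2) whenever a^k + a^-(k+1) >= 2, which
   k^2 (a - 1) <= 1 does not rule out. *)
Definition invpow_supp {d} (u : 'I_d -> nat) (j : 'I_d) : R :=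
  if (0 < u j)%N then (a ^+ u j)^-1 else 0.

Definition beyond {d} (t : 'I_d -> nat) (x : 'rV[R]_d) : Prop :=
  d%:R < wsum (invpow t) x.

Definition under_level {d} k (x : 'rV[R]_d) : Prop :=
  forall u : 'I_d -> nat, (k < \sum_j u j)%N ->
    wsum (invpow_supp u) x < #|[pred j | (0 < u j)%N]|%:R.

Lemma Ld_powpt d (x : 'rV[R]_d) : Ld a x -> exists e, x = powpt e.
Proof.
move=> /fin_all_exists[e xE]; exists e.
by apply/matrixP => i j; rewrite mxE (ord1 i) xE.
Qed.

Lemma wsum_powpt d (w : 'I_d -> R) (e : 'I_d -> nat) :
  wsum w (powpt e) = \sum_j w j * a ^+ e j.
Proof. by apply: eq_bigr => j _; rewrite mxE. Qed.

Lemma beyond_powpt d (t t' : 'I_d -> nat) :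
  (\sum_j t j = \sum_j t' j)%N -> ~ t =1 t' -> beyond t' (powpt t).
Proof.
move=> sum_eq neq; rewrite /beyond wsum_powpt.
have [j0 lt_j0] := sum_eq_exists_ltn sum_eq neq.
pose line j := 1 + (1 - a^-1) * ((t j)%:R - (t' j)%:R).
have line_sum : \sum_j line j = d%:R.
  rewrite big_split /= -mulr_sumr sumrB -!natr_sum sum_eq subrr mulr0 addr0.
  by rewrite sumr_const card_ord.
rewrite -line_sum (bigD1 j0) // [X in _ < X](bigD1 j0) //=.
apply: ltr_leD; first by rewrite /invpow mulrC expr_div_gt.
by apply: ler_sum => j _; rewrite /invpow mulrC expr_div_ge.
Qed.

Lemma not_beyond_powpt d (t n : 'I_d -> nat) :
  (forall j, n j <= t j)%N -> ~ beyond t (powpt n).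
Proof.
move=> le_nt; rewrite /beyond wsum_powpt; apply/negP; rewrite -leNgt.
rewrite -[d in X in _ <= X]card_ord -sumr_const.
apply: ler_sum => j _.
by rewrite /invpow mulrC ler_pdivrMr // mul1r ler_eXn2l.
Qed.

Lemma sum_onem_invpow d (u : 'I_d -> nat) :
  \sum_j (1 - (a ^+ u j)^-1) = #|[pred j | (0 < u j)%N]|%:R - \sum_j invpow_supp u j.
Proof.
rewrite -sum1_card natr_sum [X in _ = X - _]big_mkcond -sumrB; apply: eq_bigr => j _ /=.
rewrite /invpow_supp inE /=; case: ifP => // /negbT; rewrite -eqn0Ngt => /eqP ->.
by rewrite expr0 invr1 !subrr.
Qed.

Lemma wsum_invpow_supp_powpt d (u : 'I_d -> nat) :
  wsum (invpow_supp u) (powpt u) = #|[pred j | (0 < u j)%N]|%:R.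
Proof.
rewrite wsum_powpt -sum1_card natr_sum [RHS]big_mkcond; apply: eq_bigr => j _ /=.
by rewrite /invpow_supp inE /=; case: ifP => _; rewrite ?mul0r // mulVf ?gt_eqF.
Qed.

Lemma not_under_level_powpt d k (n : 'I_d -> nat) :
  (k < \sum_j n j)%N -> ~ under_level k (powpt n).
Proof. by move=> lt_kn /(_ n lt_kn); rewrite wsum_invpow_supp_powpt ltxx. Qed.

Lemma under_level_powpt d k (p : 'I_d -> nat) :
  (k ^ 2)%:R * (a - 1) <= 1 -> (\sum_j p j)%N = k -> under_level k (powpt p).
Proof.
move=> small sum_p u lt_k_u; rewrite wsum_powpt.
have [j1 u_j1] : exists j, (0 < u j)%N.
  apply/existsP; apply: contraLR lt_k_u; rewrite negb_exists -leqNgt => /forallP u0.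
  by rewrite big1 // => j _; apply/eqP; rewrite eqn0Ngt u0.
have [js u_js min_js] := @arg_minnP _ j1 (fun j => 0 < u j)%N u u_j1.
set s := u _ in u_js min_js; set W := (a ^+ s)^-1; set w := invpow_supp u.
have w_bound j : 0 <= w j <= W.
  rewrite /w /invpow_supp; case: ifP => [u_j|_]; last by rewrite lexx invr_ge0 ltW.
  by rewrite invr_ge0 ltW //= lef_pV2 ?posrE // ler_eXn2l // min_js.
have split_w : \sum_j w j * a ^+ p j = \sum_j w j + \sum_j w j * (a ^+ p j - 1).
  by rewrite -big_split; apply: eq_bigr => j _ /=; ring.
have excess_le : \sum_j w j * (a ^+ p j - 1) <= W * (a ^+ k - 1).
  by rewrite -sum_p sum_mul_expr_subr1_le ?invr_ge0 ?(ltW (expr_gt0 s)) ?(ltW a_gt1).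
set b := (\sum_(j | j != js) u j)%N.
have lt_k_sb : (k < s + b)%N by move: lt_k_u; rewrite (bigD1 js).
have onem_b_le : 1 - (a ^+ b)^-1 <= \sum_(j | j != js) (1 - (a ^+ u j)^-1).
  rewrite -prodrXr -prodfV; apply: onem_prod_le_sum => j _.
  by rewrite invr_ge0 ltW //= invr_le1 ?unitfE ?gt_eqF // exprn_ege1 // ltW.
have supp_gap := sum_onem_invpow u; rewrite (bigD1 js) //= -/s -/W in supp_gap.
have lt2 := expr_div_addV_lt2 a_gt1 small u_js lt_k_sb.
have W_eq : W * (a ^+ k - 1) = a ^+ k / a ^+ s - W by rewrite /W; ring.
lra.
Qed.

Lemma powpt_Ld d (e : 'I_d -> nat) : Ld a (powpt e).
Proof. by move=> j; exists (e j); rewrite mxE. Qed.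

Lemma convex_beyond d (t : 'I_d -> nat) : convex_set (beyond t).
Proof. exact: convex_wsum_gt. Qed.

Lemma convex_under_level d k : convex_set (@under_level d k).
Proof. by apply: convex_set_forall => u _; apply: convex_wsum_lt. Qed.

End ExponentialLattice.

Lemma ord_partition_ge d k (n : 'I_d.+1 -> nat) : (\sum_j n j <= k)%N ->
  exists2 t : d.+1.-tuple 'I_k.+1,
    (\sum_(i <- t) i == k)%N & forall j, (n j <= tnth t j)%N.
Proof.
move=> le_nk; set slack := (k - \sum_j n j)%N.
have le_n j : (n j <= \sum_j n j)%N by rewrite (bigD1 j) //= leq_addr.
pose t : d.+1.-tuple 'I_k.+1 := [tuple inord (n j + (j == ord0) * slack) | j < d.+1].
have tE j : tnth t j = (n j + (j == ord0) * slack)%N :> nat.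
  by rewrite tnth_mktuple inordK // ltnS; have := le_n j; case: (j == ord0); lia.
exists t => [|j]; last by rewrite tE leq_addr.
rewrite big_tuple (eq_bigr _ (fun j _ => tE j)) big_split /=.
have -> : (\sum_(j < d.+1) (j == ord0) * slack = slack)%N.
  by rewrite (bigD1 ord0) //= big1 ?mul1n ?addn0 // => j /negbTE ->.
by rewrite subnKC.
Qed.

Theorem theorem2 (R : realType) (alpha : R) (d : nat) :
  1 < alpha -> (1 < d)%N ->
  let k := Num.truncn (Num.sqrt ((alpha - 1)^-1)) in
  helly_number_ge (@Ld R d alpha) 'C((k + d - 1)%N, (d - 1)%N).
Proof.
move=> a_gt1 d_gt1 k.
have small : (k ^ 2)%:R * (alpha - 1) <= 1.
  by apply: truncn_sqrtV_sqr_le; rewrite subr_gt0.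
case: d d_gt1 => // d _.
rewrite addnS !subn1 /= addnC -card_ord_partitions.
pose exps (t : d.+1.-tuple 'I_k.+1) j := (tnth t j : nat).
have sum_exps t : (\sum_j exps t j = \sum_(i <- t) i)%N by rewrite big_tuple.
apply: (helly_number_ge_critical
  (F := fun t x => under_level alpha k x /\ beyond alpha (exps t) x)).
- by move=> t _; apply: convex_setI; [apply: convex_under_level | apply: convex_beyond].
- move=> t0; rewrite inE => /eqP sum_t0; exists (powpt alpha (exps t0)).
  split=> [|t]; first exact: powpt_Ld.
  rewrite inE => /eqP sum_t t_neq; split.
    by apply: under_level_powpt; rewrite ?sum_exps.
  apply: (beyond_powpt a_gt1); first by rewrite !sum_exps sum_t sum_t0.
  move=> eq_exps; move/eqP: t_neq; apply.
  by apply: eq_from_tnth => j; apply: val_inj; apply/esym/eq_exps.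
- case=> _ [/Ld_powpt [n ->] F_n].
  have [lt_kn | le_nk] := ltnP k (\sum_j n j).
    have /ord_partition_ge[t0 t0E _] : (\sum_(j < d.+1) 0 <= k)%N by rewrite big1.
    by apply: (not_under_level_powpt a_gt1 lt_kn); apply: (F_n t0 _).1; rewrite inE.
  have [t tE le_nt] := ord_partition_ge le_nk.
  by apply: (not_beyond_powpt a_gt1 le_nt); apply: (F_n t _).2; rewrite inE.
Qed.
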